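(* There is an absolute constant $C>0$ such that every Hamming-trigraph with sensitivity $\varepsilon\in(0,1]$ has VC-dimension at most $C/\varepsilon^2$ (independently of the dimension $N$).
   Context: A trigraph is $T=(V,E,R)$ where $V$ is a finite vertex set, $E$ (plain edges) and $R$ (red edges) are disjoint sets of unordered pairs of distinct vertices; $N[v]$ is $v$ together with its plain neighbours and $R(v)$ its red neighbours. A set $X\subseteq V$ is shattered if there is a set $S$ of $2^{|X|}$ vertices, none having a red neighbour in $X$, such that for every $Y\subseteq X$ some $v_Y\in S$ has $N[v_Y]\cap X=Y$; the VC-dimension is the largest size of a shattered set. A Hamming-trigraph with threshold $\tau$ and sensitivity $\varepsilon$ is a trigraph with $V\subseteq\{0,1\}^N$ for some $N$, $E=\{uv:d_H(u,v)\leq\tau N\}$ and $R=\{uv:\tau N<d_H(u,v)\leq(\tau+\varepsilon)N\}$, where $d_H$ is Hamming distance. *)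

From HB Require Import structures.
From mathcomp Require Import all_boot all_order all_algebra.
From mathcomp Require Import reals.
Set Implicit Arguments. Unset Strict Implicit. Unset Printing Implicit Defensive.
Import Order.TTheory GRing.Theory Num.Theory.

Section Trigraph.
Variable T : finType.
(* A trigraph on vertex set V : {set T}, plain edges E and red edges R given
   as (symmetric) relations on T; only pairs of vertices of V matter. *)
Variables (V : {set T}) (E Rd : rel T).

Definition closed_nbhd (v : T) : {set T} := [set u in V | (u == v) || E v u].
Definition red_nbhd (v : T) : {set T} := [set u in V | Rd v u].

Definition shattered (X : {set T}) : bool :=
  (X \subset V) &&
  [exists S : {set T},
    [&& S \subset V, #|S| == 2 ^ #|X|,
        [forall v in S, red_nbhd v :&: X == set0] &
        [forall Y : {set T}, (Y \subset X) ==>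
            [exists v in S, closed_nbhd v :&: X == Y]]]].

Definition vc_dim : nat := \max_(X : {set T} | shattered X) #|X|.
End Trigraph.

Section Hamming.
Variable R : realType.
Local Open Scope ring_scope.

Definition hamming_dist (N : nat) (u v : {ffun 'I_N -> bool}) : nat :=
  #|[set i | u i != v i]|.

Definition hamming_E (N : nat) (tau : R) : rel {ffun 'I_N -> bool} :=
  fun u v => (u != v) && ((hamming_dist u v)%:R <= tau * N%:R).

Definition hamming_R (N : nat) (tau eps : R) : rel {ffun 'I_N -> bool} :=
  fun u v => [&& u != v, tau * N%:R < (hamming_dist u v)%:R &
                 (hamming_dist u v)%:R <= (tau + eps) * N%:R].
End Hamming.
Arguments hamming_E {R} N tau.
Arguments hamming_R {R} N tau eps.

From mathcomp Require Import all_boot all_order all_algebra.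
From mathcomp Require Import reals.
From mathcomp Require Import ring lra.
Set Implicit Arguments. Unset Strict Implicit. Unset Printing Implicit Defensive.
Import Order.TTheory GRing.Theory Num.Theory.
Local Open Scope ring_scope.

(* Let X be shattered, with witnesses w_Y close (distance <= tau N) to every
   point of Y and far (distance > (tau + eps) N) from every point of X \ Y.
   The correlation Q = sum_Y sum_(x in X) (-1)^[x in Y] d(w_Y, x) is at least
   2^|X| |X| eps N / 2 by the separation gap.  Conversely, splitting d into
   coordinates, coordinate j contributes at most |sum_x (-1)^[x in Y]| +
   |sum_x (-1)^[x in Y] x_j|; the characters Y |-> (-1)^[x in Y] are
   orthogonal, so Parseval and 2 t |u| <= u^2 + t^2 bound the sum over Y by
   2^|X| (|X| + t^2) / t, whence Q <= 2^|X| N (|X| + t^2) / t.  Taking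
   t = 4 / eps gives |X| <= 16 / eps^2.  When tau N <= 0 the closed
   neighbourhoods are singletons and |X| <= 1. *)

Section PowersetSigns.
Variables (R : realDomainType) (T : finType) (X : {set T}).

Definition sgn_in (Y : {set T}) (x : T) : R := (-1) ^+ (x \in Y).

Definition toggle (x : T) (Y : {set T}) : {set T} :=
  [set y | (y \in Y) (+) (y == x)].

Lemma in_toggle x Y y : (y \in toggle x Y) = (y \in Y) (+) (y == x).
Proof. by rewrite inE. Qed.

Lemma toggleK x : involutive (toggle x).
Proof. by move=> Y; apply/setP => y; rewrite !in_toggle addbK. Qed.

Lemma toggle_subset x Y : x \in X -> (toggle x Y \subset X) = (Y \subset X).
Proof.
move=> xX; have toggle_sub (Z : {set T}) : Z \subset X -> toggle x Z \subset X.
  move=> /subsetP sZX; apply/subsetP => y; rewrite in_toggle.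
  by case: eqVneq => [-> | _]; rewrite ?addbT ?addbF //; apply: sZX.
by apply/idP/idP => [/toggle_sub | /toggle_sub //]; rewrite toggleK.
Qed.

Lemma sgn_in_toggle x Y y :
  sgn_in (toggle x Y) y = (-1) ^+ (y == x) * sgn_in Y y.
Proof. by rewrite /sgn_in in_toggle signr_addb mulrC. Qed.

(* The involution [toggle x] of [powerset X] pairs off the terms of an odd sum. *)
Lemma sum_powerset_odd x (F : {set T} -> R) : x \in X ->
  (forall Y, F (toggle x Y) = - F Y) -> \sum_(Y in powerset X) F Y = 0.
Proof.
move=> xX FN; set S := \sum_(Y in _) _.
have SN : S = - S.
  rewrite {1}/S (reindex_inj (inv_inj (toggleK x))) /= -sumrN.
  apply: eq_big => [Y | Y _]; last exact: FN.
  by rewrite !powersetE toggle_subset.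
by apply/eqP; rewrite -[_ == 0](mulrn_eq0 _ 2) mulr2n addr_eq0 -SN.
Qed.

Lemma sum_sgn_in x : x \in X -> \sum_(Y in powerset X) sgn_in Y x = 0.
Proof.
move=> xX; apply: (sum_powerset_odd (F := sgn_in^~ x) xX) => Y.
by rewrite sgn_in_toggle eqxx mulN1r.
Qed.

Lemma sum_sgn_inM x y : x \in X -> y \in X ->
  \sum_(Y in powerset X) sgn_in Y x * sgn_in Y y = (x == y)%:R * 2 ^+ #|X|.
Proof.
move=> xX yX; have [<- | neq_xy] := eqVneq x y.
  rewrite mul1r (eq_bigr (fun=> 1)) => [|Y _]; last by rewrite -expr2 sqrr_sign.
  by rewrite sumr_const card_powerset natrX.
rewrite mul0r.
apply: (sum_powerset_odd (F := fun Y => sgn_in Y x * sgn_in Y y) xX) => Y.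
by rewrite !sgn_in_toggle eqxx eq_sym (negbTE neq_xy) mulN1r mul1r mulNr.
Qed.

Lemma sum_powerset_sqr (a : T -> R) :
  \sum_(Y in powerset X) (\sum_(x in X) sgn_in Y x * a x) ^+ 2
  = 2 ^+ #|X| * \sum_(x in X) a x ^+ 2.
Proof.
under eq_bigr do rewrite expr2 mulr_suml.
under eq_bigr do under eq_bigr do rewrite mulr_sumr.
rewrite exchange_big mulr_sumr; apply: eq_bigr => x xX.
have cross y : y \in X ->
    \sum_(Y in powerset X) sgn_in Y x * a x * (sgn_in Y y * a y)
    = (x == y)%:R * 2 ^+ #|X| * (a x * a y).
  move=> yX; rewrite -(sum_sgn_inM xX yX) mulr_suml.
  by apply: eq_bigr => Y _; ring.
rewrite exchange_big (bigD1 x) //= cross // eqxx mul1r.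
rewrite big1 ?addr0 => [|y /andP[yX neq_yx]].
  by rewrite expr2.
by rewrite cross // eq_sym (negbTE neq_yx) !mul0r.
Qed.

Lemma sum_powerset_norm_le (a : T -> R) (t : R) :
  {in X, forall x, a x ^+ 2 <= 1} ->
  2 * t * \sum_(Y in powerset X) `|\sum_(x in X) sgn_in Y x * a x|
  <= 2 ^+ #|X| * (#|X|%:R + t ^+ 2).
Proof.
move=> a_le1.
have amgm (u : R) : 2 * t * `|u| <= u ^+ 2 + t ^+ 2.
  by rewrite -real_normK ?num_real //; have := sqr_ge0 (`|u| - t); lra.
apply: (le_trans (y := \sum_(Y in powerset X)
    ((\sum_(x in X) sgn_in Y x * a x) ^+ 2 + t ^+ 2))).
  by rewrite mulr_sumr; apply: ler_sum => Y _.
rewrite big_split /= sum_powerset_sqr sumr_const card_powerset.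
rewrite -[t ^+ 2 *+ _]mulr_natl natrX.
rewrite mulrDr lerD2r ler_wpM2l ?exprn_ge0 //.
by rewrite -[#|X|%:R]mulr1 mulr_natl -sumr_const; apply: ler_sum.
Qed.

Lemma sum_powerset_sgn_ge (f : {set T} -> T -> R) (a b : R) :
  (forall Y x, Y \in powerset X -> x \in Y -> f Y x <= a) ->
  (forall Y x, Y \in powerset X -> x \in X :\: Y -> b <= f Y x) ->
  2 ^+ #|X| * #|X|%:R * (b - a)
  <= 2 * \sum_(Y in powerset X) \sum_(x in X) sgn_in Y x * f Y x.
Proof.
move=> f_le f_ge.
have -> : 2 ^+ #|X| * #|X|%:R * (b - a)
    = \sum_(Y in powerset X) \sum_(x in X) ((b - a) + (a + b) * sgn_in Y x).
  rewrite exchange_big /= (eq_bigr (fun=> 2 ^+ #|X| * (b - a))) => [|x xX].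
    by rewrite sumr_const -[RHS]mulr_natr mulrAC.
  rewrite big_split /= -mulr_sumr sum_sgn_in // mulr0 addr0 sumr_const.
  by rewrite card_powerset -[(b - a) *+ _]mulr_natl natrX.
rewrite mulr_sumr; apply: ler_sum => Y YX; rewrite mulr_sumr; apply: ler_sum => x xX.
rewrite /sgn_in; case: (boolP (x \in Y)) => xY;
  rewrite ?expr1 ?expr0 ?mulr1 ?mul1r ?mulN1r ?mulrN1.
  by move: (f_le Y x YX xY); clear; lra.
have xXY : x \in X :\: Y by rewrite in_setD xY xX.
by move: (f_ge Y x YX xXY); clear; lra.
Qed.

End PowersetSigns.

Arguments sgn_in {R T} Y x.

Lemma sum_neq_le (R : realDomainType) (I : finType) (P : pred I) (w : I -> R)
    (b : bool) (c : I -> bool) :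
  \sum_(i | P i) w i * (b != c i)%:R
  <= `|\sum_(i | P i) w i| + `|\sum_(i | P i) w i * (c i)%:R|.
Proof.
set A := \sum_(i | P i) w i; set B := \sum_(i | P i) w i * (c i)%:R.
have -> : \sum_(i | P i) w i * (b != c i)%:R = if b then A - B else B.
  rewrite /A /B; case: b; last by apply: eq_bigr => i _; case: (c i).
  rewrite -sumrB; apply: eq_bigr => i _.
  by case: (c i); rewrite ?mulr1 ?mulr0 ?subrr ?subr0.
case: b.
  exact: le_trans (ler_norm _) (ler_normB _ _).
by apply: le_trans (ler_norm B) _; rewrite lerDr.
Qed.

Section HammingDistance.
Variable N : nat.
Local Notation word := {ffun 'I_N -> bool}.

Lemma hamming_dist_eq0 (u v : word) : (hamming_dist u v == 0%N) = (u == v).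
Proof.
rewrite /hamming_dist cards_eq0; apply/eqP/eqP => [uv | ->].
  apply/ffunP => i; apply/eqP/negPn/negP => neq_uvi.
  have : i \in [set i | u i != v i] by rewrite inE.
  by rewrite uv inE.
by apply/setP => i; rewrite !inE eqxx.
Qed.

Lemma hamming_distE (R : pzSemiRingType) (u v : word) :
  (hamming_dist u v)%:R = \sum_(j < N) (u j != v j)%:R :> R.
Proof.
rewrite /hamming_dist -sum1_card natr_sum big_mkcond /=.
by apply: eq_bigr => j _; rewrite inE; case: (_ != _).
Qed.

Lemma sum_sgn_hamming_le (R : realDomainType) (X : {set word})
    (w : {set word} -> word) (t : R) : 0 <= t ->
  2 * t * \sum_(Y in powerset X) \sum_(x in X)
            sgn_in Y x * (hamming_dist (w Y) x)%:R
  <= 2 * N%:R * (2 ^+ #|X| * (#|X|%:R + t ^+ 2)).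
Proof.
move=> t_ge0.
have coord_le Y : \sum_(x in X) (sgn_in Y x : R) * (hamming_dist (w Y) x)%:R
    <= \sum_(j < N) (`|\sum_(x in X) sgn_in Y x|
                     + `|\sum_(x in X) sgn_in Y x * (x j)%:R|).
  under eq_bigr do rewrite hamming_distE mulr_sumr.
  by rewrite exchange_big; apply: ler_sum => j _; apply: sum_neq_le.
have ones_le : 2 * t * \sum_(Y in powerset X) `|\sum_(x in X) sgn_in Y x|
    <= 2 ^+ #|X| * (#|X|%:R + t ^+ 2).
  apply: le_trans (sum_powerset_norm_le (a := fun=> 1) t _) => [|x _];
    last by rewrite expr1n.
  by under [X in _ <= _ * X]eq_bigr do under eq_bigr do rewrite mulr1.
have bits_le j :
    2 * t * \sum_(Y in powerset X) `|\sum_(x in X) sgn_in Y x * (x j)%:R|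
    <= 2 ^+ #|X| * (#|X|%:R + t ^+ 2).
  by apply: sum_powerset_norm_le => x _; case: (x j); rewrite ?expr1n ?expr0n.
apply: (le_trans (y := 2 * t * \sum_(Y in powerset X) \sum_(j < N)
    (`|\sum_(x in X) sgn_in Y x| + `|\sum_(x in X) sgn_in Y x * (x j)%:R|))).
  by rewrite ler_wpM2l ?mulr_ge0 //; apply: ler_sum => Y _; apply: coord_le.
rewrite exchange_big /= mulr_sumr.
apply: (le_trans (y := \sum_(j < N) 2 * (2 ^+ #|X| * (#|X|%:R + t ^+ 2)))).
  apply: ler_sum => j _; rewrite big_split /= mulrDr.
  by rewrite [leRHS]mulr_natl mulr2n; apply: lerD.
by rewrite sumr_const card_ord -[_ *+ N]mulr_natl mulrCA mulrA.
Qed.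

Lemma separating_words_card_le (R : realFieldType) (X : {set word})
    (w : {set word} -> word) (tau eps : R) : 0 < eps -> (0 < N)%N ->
  (forall Y x, Y \in powerset X -> x \in Y ->
     (hamming_dist (w Y) x)%:R <= tau * N%:R) ->
  (forall Y x, Y \in powerset X -> x \in X :\: Y ->
     (tau + eps) * N%:R <= (hamming_dist (w Y) x)%:R) ->
  #|X|%:R <= 16 / eps ^+ 2.
Proof.
move=> eps_gt0 N_gt0 close far.
set K : R := 2 ^+ #|X|; set d : R := #|X|%:R; set n : R := N%:R.
pose Q : R := \sum_(Y in powerset X) \sum_(x in X)
  sgn_in Y x * (hamming_dist (w Y) x)%:R.
have lower : K * d * (eps * n) <= 2 * Q.
  have := sum_powerset_sgn_ge
    (f := fun Y x => (hamming_dist (w Y) x)%:R) close far.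
  by rewrite -/K -/d -/Q (_ : _ - _ = eps * n) //; ring.
pose t := 4 / eps. (* minimises the resulting bound t ^+ 2 / (eps * t / 2 - 1) *)
have t_ge0 : 0 <= t by rewrite divr_ge0 ?ltW.
have mul_gt0 : 0 < n * K by rewrite mulr_gt0 ?exprn_gt0 ?ltr0n.
have : 4 * (n * K * d) <= 2 * n * (K * (d + t ^+ 2)).
  apply: le_trans (sum_sgn_hamming_le X w t_ge0); rewrite -/K -/d -/Q.
  rewrite (_ : 4 * _ = t * (K * d * (eps * n)));
    last by rewrite /t; field; rewrite gt_eqF.
  by apply: le_trans (ler_wpM2l t_ge0 lower) _; rewrite mulrCA mulrA.
rewrite (_ : 2 * n * _ = 2 * (n * K * d) + 2 * (n * K * t ^+ 2)); last by ring.
rewrite (_ : t ^+ 2 = 16 / eps ^+ 2); last by rewrite /t; field; rewrite gt_eqF.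
move=> key; rewrite -(ler_pM2l mul_gt0); move: key.
set a := n * K * d; set b := n * K * _.
by clearbody a b; clear; lra.
Qed.

End HammingDistance.

Lemma shattered_witness (T : finType) (V : {set T}) (E Rd : rel T) (X : {set T}) :
  shattered V E Rd X ->
  exists w : {set T} -> T, forall Y : {set T}, Y \subset X ->
    closed_nbhd V E (w Y) :&: X = Y /\ red_nbhd V Rd (w Y) :&: X = set0.
Proof.
move=> /andP[_ /existsP[S /and4P[_ _ /forallP redS /forallP allY]]].
have /existsP[v0 _] := implyP (allY set0) (sub0set X).
suff /fin_all_exists[w wP] : forall Y : {set T}, exists v : T, Y \subset X ->
    closed_nbhd V E v :&: X = Y /\ red_nbhd V Rd v :&: X = set0 by exists w.
move=> Y; have [YX | /negP nYX] := boolP (Y \subset X); last by exists v0.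
have /existsP[v /andP[vS /eqP vY]] := implyP (allY Y) YX.
by exists v => _; split=> //; apply/eqP; apply: (implyP (redS v) vS).
Qed.

Lemma vc_dim_ind (T : finType) (V : {set T}) (E Rd : rel T) (P : nat -> Prop) :
  P 0%N -> (forall X, shattered V E Rd X -> P #|X|) -> P (vc_dim V E Rd).
Proof.
by move=> P0 PX; apply: big_ind => // m k Pm Pk; rewrite /maxn; case: ifP.
Qed.

Section HammingTrigraph.
Variables (R : realType) (N : nat) (V : {set {ffun 'I_N -> bool}}) (tau eps : R).
Local Notation word := {ffun 'I_N -> bool}.
Local Notation closed_nbhdH := (closed_nbhd V (hamming_E N tau)).
Local Notation red_nbhdH := (red_nbhd V (hamming_R N tau eps)).
Local Notation shatteredH := (shattered V (hamming_E N tau) (hamming_R N tau eps)).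

Lemma closed_nbhd_hamming_dist (v x : word) : x \in closed_nbhdH v ->
  (hamming_dist v x)%:R <= Num.max 0 (tau * N%:R).
Proof.
rewrite inE => /andP[_ /orP[/eqP-> | /andP[_ dist_le]]].
  have /eqP-> : hamming_dist v v == 0%N by rewrite hamming_dist_eq0.
  by rewrite le_max lexx.
by rewrite le_max dist_le orbT.
Qed.

Lemma hamming_dist_far (v x : word) : x \in V ->
  x \notin closed_nbhdH v -> x \notin red_nbhdH v ->
  (tau + eps) * N%:R < (hamming_dist v x)%:R.
Proof.
move=> xV; rewrite !inE xV /= /hamming_E /hamming_R negb_or (eq_sym x v).
by case: (v != x) => //=; rewrite -ltNge => ->; rewrite -ltNge.
Qed.

Lemma shattered_hamming_card_le1 (X : {set word}) :
  tau * N%:R <= 0 -> shatteredH X -> (#|X| <= 1)%N.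
Proof.
move=> tauN_le0 /shattered_witness[w /(_ X (subxx X))[closedX _]].
rewrite -(cards1 (w X)); apply/subset_leq_card/subsetP => x xX.
have : x \in closed_nbhdH (w X) :&: X by rewrite closedX.
rewrite in_setI => /andP[/closed_nbhd_hamming_dist + _].
by rewrite (max_idPl tauN_le0) lern0 hamming_dist_eq0 inE eq_sym.
Qed.

Lemma shattered_hamming_card_le (X : {set word}) : 0 < eps -> eps <= 1 ->
  shatteredH X -> #|X|%:R <= 16 / eps ^+ 2.
Proof.
move=> eps_gt0 eps_le1 shX.
have [tauN_le0 | tauN_gt0] := lerP (tau * N%:R) 0.
  apply: (@le_trans _ _ 1); first by rewrite lern1 shattered_hamming_card_le1.
  rewrite ler_pdivlMr ?exprn_gt0 // mul1r.
  by apply: le_trans (exprn_ile1 _ (ltW eps_gt0) eps_le1) _; rewrite ler1n.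
have N_gt0 : (0 < N)%N.
  by rewrite lt0n; apply: contraTneq tauN_gt0 => ->; rewrite mulr0 ltxx.
case/andP: (shX) => XV _; have [w wP] := shattered_witness shX.
apply: (separating_words_card_le (w := w) (tau := tau) eps_gt0 N_gt0).
  move=> Y x; rewrite powersetE => YX xY; have [closedY _] := wP Y YX.
  have : x \in closed_nbhdH (w Y) :&: X by rewrite closedY.
  rewrite in_setI => /andP[/closed_nbhd_hamming_dist + _].
  by rewrite (max_idPr (ltW tauN_gt0)).
move=> Y x; rewrite powersetE => YX /setDP[xX xnY].
have [closedY redY] := wP Y YX.
apply/ltW/hamming_dist_far; first exact: (subsetP XV).
  have : x \notin closed_nbhdH (w Y) :&: X by rewrite closedY.
  by rewrite in_setI xX andbT.
have : x \notin red_nbhdH (w Y) :&: X by rewrite redY inE.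
by rewrite in_setI xX andbT.
Qed.

End HammingTrigraph.

Theorem theorem4p1 (R : realType) :
  exists C : R, 0 < C /\
    forall (N : nat) (V : {set {ffun 'I_N -> bool}}) (tau eps : R),
      0 < eps -> eps <= 1 ->
      (vc_dim V (hamming_E N tau) (hamming_R N tau eps))%:R <= C / eps ^+ 2.
Proof.
exists 16; split=> [|N V tau eps eps_gt0 eps_le1]; first by rewrite ltr0n.
apply: (vc_dim_ind (P := fun m => m%:R <= 16 / eps ^+ 2)) => [|X].
  by rewrite divr_ge0 ?exprn_ge0 ?ltW.
exact: shattered_hamming_card_le.
Qed.
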